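(* Let $a,d,r,h,n$ be positive integers with $r\geq2$, $\gcd(a,d)=\gcd(a,r)=1$ and $d>hn(r-1)$. Put $a_0=a$ and $a_{k+1}=ha+r^kd$ for $0\leq k\leq n$, and suppose $\{a_0,\dots,a_{n+1}\}$ is a minimal system of generators of the numerical semigroup $\mathfrak{S}_{n+2}=\langle a_0,\dots,a_{n+1}\rangle$. For $1\leq i\leq a-1$ let $i=\sum_{k=0}^{n}a_{ki}r^k$ be the $r$-adic representation of $i$ up to order $n$ and $\ell_i=\sum_{k=0}^{n}a_{ki}$. Then $$\mathrm{Ap}(\mathfrak{S}_{n+2},a)=\{0\}\cup\{\ell_iha+id\mid 1\leq i\leq a-1\}.$$
   Context: The $r$-adic representation of $i$ up to order $n$ is the unique expression $i=\sum_{k=0}^{n}\alpha_kr^k$ with nonnegative integers $\alpha_k$, $0\leq\alpha_k\leq r-1$ for $k\leq n-1$ and $\alpha_n$ unrestricted. $\mathrm{Ap}(\Gamma,a)=\{s\in\Gamma\mid s-a\notin\Gamma\}$. *)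

From mathcomp Require Import all_boot.
Set Implicit Arguments. Unset Strict Implicit. Unset Printing Implicit Defensive.

Definition in_semigroup (m : nat) (g : nat -> nat) (s : nat) : Prop :=
  exists c : nat -> nat, s = \sum_(k < m) c k * g k.

Definition in_semigroup_excl (m : nat) (g : nat -> nat) (j : nat) (s : nat) : Prop :=
  exists c : nat -> nat, s = \sum_(k < m | val k != j) c k * g k.

Definition minimal_generators (m : nat) (g : nat -> nat) : Prop :=
  forall j, j < m -> ~ in_semigroup_excl m g j (g j).

(* Apery set Ap(S, a) = { s in S | s - a not in S } (integer subtraction). *)
Definition in_apery (m : nat) (g : nat -> nat) (a s : nat) : Prop :=
  in_semigroup m g s /\ ~ (a <= s /\ in_semigroup m g (s - a)).

Definition gens (a d r h : nat) (k : nat) : nat :=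
  if k == 0 then a else h * a + r ^ (k.-1) * d.

(* k-th digit of the r-adic representation of i up to order n:
   alpha_k = (i / r^k) mod r for k < n, alpha_n = i / r^n (unrestricted). *)
Definition radic_digit (r n i k : nat) : nat :=
  if k < n then (i %/ r ^ k) %% r else i %/ r ^ n.

Definition radic_len (r n i : nat) : nat :=
  \sum_(k < n.+1) radic_digit r n i k.

From mathcomp Require Import all_boot zify.

Set Implicit Arguments. Unset Strict Implicit. Unset Printing Implicit Defensive.

(* Write L(i) for the digit sum [radic_len r n i] of the r-adic representation
   of i up to order n, and w(i) = L(i) h a + i d.  The proof characterises the
   semigroup S = <a_0, ..., a_{n+1}> as the set of numbers X a + w(i) with
   X >= 0 and 0 <= i < a; the Apery set is then read off directly.

   The r-adic representation is the cheapest way of writing i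
      as a combination of 1, r, ..., r^n: L(sum c_k r^k) <= sum c_k.  Moreover
      L is monotone up to the bounded low digits: x <= y implies
      L(x) <= L(y) + n(r-1).
   2. Semigroup.  An element c_0 a + sum c_{k+1} a_{k+1} equals
      (c_0 + C h) a + J d with C = sum c_{k+1} and J = sum c_{k+1} r^k.
      Writing J = t a + i with i < a, the two digit-sum facts and
      d > h n (r-1) show that the coefficient of a is at least L(i) h.
   3. Apery set.  Since gcd(a,d) = 1, the w(i) with i < a are pairwise
      incongruent modulo a, so w(i) - a never lies in S, while X a + w(i)
      with X > 0 is not in the Apery set.  Finally w(0) = 0. *)

Section DigitSums.

Variable r : nat.
Hypothesis r_gt0 : 0 < r.

Lemma radic_len0 x : radic_len r 0 x = x.
Proof. by rewrite /radic_len big_ord_recl big_ord0 /radic_digit expn0 divn1 addn0. Qed.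

Lemma radic_digitS n x k : radic_digit r n.+1 x k.+1 = radic_digit r n (x %/ r) k.
Proof. by rewrite /radic_digit ltnS !expnS !divnMA. Qed.

Lemma radic_digit0 n x : radic_digit r n.+1 x 0 = x %% r.
Proof. by rewrite /radic_digit expn0 divn1. Qed.

Lemma radic_lenS n x : radic_len r n.+1 x = x %% r + radic_len r n (x %/ r).
Proof.
rewrite /radic_len big_ord_recl radic_digit0; congr (_ + _).
by apply: eq_bigr => k _; rewrite lift0 radic_digitS.
Qed.

Lemma radic_len_0 n : radic_len r n 0 = 0.
Proof. by elim: n => [|n IHn]; rewrite ?radic_len0 // radic_lenS mod0n div0n IHn. Qed.

Lemma radic_digitsK n x : \sum_(k < n.+1) radic_digit r n x k * r ^ k = x.
Proof.
elim: n x => [|n IHn] x.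
  by rewrite big_ord_recl big_ord0 /radic_digit expn0 divn1 muln1 addn0.
rewrite big_ord_recl radic_digit0 expn0 muln1.
under eq_bigr => k _ do rewrite lift0 radic_digitS expnS mulnCA.
by rewrite -big_distrr /= IHn addnC mulnC -divn_eq.
Qed.

(* Adding one increases the digit sum by at most one (carries only help). *)
Lemma radic_len_succ n x : radic_len r n x.+1 <= (radic_len r n x).+1.
Proof.
elim: n x => [|n IHn] x; first by rewrite !radic_len0.
rewrite !radic_lenS.
have x_mod_lt := ltn_pmod x r_gt0.
have [no_carry | carry] := ltnP (x %% r).+1 r.
  have ->: x.+1 = x %/ r * r + (x %% r).+1 by rewrite {1}(divn_eq x r) addnS.
  by rewrite modnMDl divnMDl // (modn_small no_carry) (divn_small no_carry) addn0.
have ->: x.+1 = (x %/ r).+1 * r by rewrite mulSn {1}(divn_eq x r); lia.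
by rewrite modnMl mulnK // add0n (leq_trans (IHn _)) // ltnS leq_addl.
Qed.

Lemma radic_len_addn n x q : radic_len r n (x + q) <= radic_len r n x + q.
Proof.
elim: q => [|q IHq]; first by rewrite !addn0.
by rewrite !addnS (leq_trans (radic_len_succ _ _)).
Qed.

Lemma radic_len_min n (c : nat -> nat) :
  radic_len r n (\sum_(k < n.+1) c k * r ^ k) <= \sum_(k < n.+1) c k.
Proof.
elim: n c => [|n IHn] c.
  by rewrite !big_ord_recl !big_ord0 radic_len0 expn0 muln1.
rewrite big_ord_recl [X in _ <= X]big_ord_recl expn0 muln1 radic_lenS.
under eq_bigr => k _ do rewrite lift0 expnS mulnCA.
under [X in _ <= _ + X]eq_bigr => k _ do rewrite lift0.
rewrite -big_distrr /=.
set Y := \sum_(k < n.+1) _ * _.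
rewrite [r * Y]mulnC [c 0 + _]addnC modnMDl divnMDl //.
apply: leq_trans (leq_add (leqnn _) (radic_len_addn n Y _)) _.
rewrite addnCA addnC; apply: leq_add; last exact: IHn (fun k => c k.+1).
by rewrite {3}(divn_eq (c 0) r) addnC leq_add2r leq_pmulr.
Qed.

(* Only the last digit is unbounded, so L is monotone up to n (r - 1). *)
Lemma radic_len_mono n x y :
  x <= y -> radic_len r n x <= radic_len r n y + n * (r - 1).
Proof.
move=> le_xy.
have lenE z : radic_len r n z = \sum_(k < n) radic_digit r n z k + z %/ r ^ n.
  by rewrite /radic_len big_ord_recr /= /radic_digit ltnn.
have low_bound : \sum_(k < n) radic_digit r n x k <= n * (r - 1).
  rewrite -[n in n * _]card_ord -sum_nat_const; apply: leq_sum => k _.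
  rewrite /radic_digit ltn_ord; have := ltn_pmod (x %/ r ^ k) r_gt0; lia.
have := leq_div2r (r ^ n) le_xy; rewrite !lenE; lia.
Qed.

End DigitSums.

Lemma coprime_mulr_mod_inj a d i j :
  coprime a d -> i < a -> j < a -> i * d = j * d %[mod a] -> i = j.
Proof.
move=> co_ad i_lt j_lt.
wlog le_ij : i j i_lt j_lt / i <= j.
  by move=> inj; case: (leqP i j) => [|/ltnW] le; [apply: inj | move/esym/inj->].
move/eqP; rewrite eq_sym eqn_mod_dvd ?leq_mul2r ?le_ij ?orbT //.
rewrite -mulnBl Gauss_dvdl // => /dvdn_leq; lia.
Qed.

Section Semigroup.

Variables a d r h n : nat.
Hypothesis a_gt0 : 0 < a.
Hypothesis r_gt0 : 0 < r.

Definition apery_elt (i : nat) : nat := radic_len r n i * h * a + i * d.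

Lemma sum_gensE (c : nat -> nat) :
  \sum_(k < n.+2) c k * gens a d r h k =
  (c 0 + (\sum_(k < n.+1) c k.+1) * h) * a + (\sum_(k < n.+1) c k.+1 * r ^ k) * d.
Proof.
rewrite big_ord_recl /gens /= mulnDl -addnA !big_distrl -big_split /=.
congr (_ + _); apply: eq_bigr => k _.
by rewrite /bump leq0n add0n mulnDr !mulnA.
Qed.

(* Using the r-adic digits of i as coefficients of a_1, ..., a_{n+1}. *)
Lemma apery_elt_in_semigroup X i :
  in_semigroup n.+2 (gens a d r h) (X * a + apery_elt i).
Proof.
pose c k := if k is k'.+1 then radic_digit r n i k' else X.
by exists c; rewrite sum_gensE radic_digitsK /apery_elt mulnDl addnA.
Qed.

(* The key estimate: the carry t of J = t a + i pays for the digit sum of i,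
   because d > h n (r-1). *)
Lemma digit_cost_bound C J t i :
  h * n * (r - 1) < d -> radic_len r n J <= C -> J = t * a + i ->
  radic_len r n i * h <= C * h + t * d.
Proof.
move=> d_big lenJ_le defJ.
have [t0 | t_gt0] := posnP t.
  move: defJ; rewrite t0 mul0n add0n addn0 => <-.
  by rewrite leq_mul2r lenJ_le orbT.
have lenI_le : radic_len r n i <= C + n * (r - 1).
  by rewrite (leq_trans (radic_len_mono r_gt0 n (_ : i <= J))) ?leq_add2r // defJ leq_addl.
have d_le : d <= t * d by rewrite leq_pmull.
have := leq_mul2r h (radic_len r n i) (C + n * (r - 1)); rewrite lenI_le orbT mulnDl.
have -> : n * (r - 1) * h = h * n * (r - 1) by rewrite mulnC mulnA.
move: (radic_len r n i * h) (C * h) (h * n * (r - 1)) (t * d) d_le d_big => *; lia.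
Qed.

Lemma in_semigroupP s : h * n * (r - 1) < d ->
  in_semigroup n.+2 (gens a d r h) s <->
  exists X, exists2 i, i < a & s = X * a + apery_elt i.
Proof.
move=> d_big; split; last by case=> X [i _ ->]; exact: apery_elt_in_semigroup.
case=> c ->; rewrite sum_gensE.
set C := \sum_(k < n.+1) _; set J := \sum_(k < n.+1) _ * _.
have lenJ_le : radic_len r n J <= C := radic_len_min r_gt0 n (fun k => c k.+1).
have cost := digit_cost_bound d_big lenJ_le (divn_eq J a).
exists (c 0 + C * h + J %/ a * d - radic_len r n (J %% a) * h).
exists (J %% a); first exact: ltn_pmod.
rewrite /apery_elt addnA -mulnDl subnK; last by rewrite -addnA (leq_trans cost) ?leq_addl.
by rewrite {1}(divn_eq J a) !mulnDl [J %/ a * a * d]mulnAC addnA.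
Qed.

Lemma apery_elt_mod_inj i j : coprime a d -> i < a -> j < a ->
  apery_elt i = apery_elt j %[mod a] -> i = j.
Proof.
move=> co_ad i_lt j_lt; rewrite /apery_elt !modnMDl.
exact: coprime_mulr_mod_inj.
Qed.

Lemma in_aperyP s : coprime a d -> h * n * (r - 1) < d ->
  in_apery n.+2 (gens a d r h) a s <-> exists2 i, i < a & s = apery_elt i.
Proof.
move=> co_ad d_big; split.
  case=> /(in_semigroupP _ d_big) [[|X] [i i_lt ->]] not_minus_a.
    by exists i; rewrite ?mul0n ?add0n.
  case: not_minus_a; rewrite mulSn -addnA leq_addr addKn; split=> //.
  exact: apery_elt_in_semigroup.
case=> i i_lt ->; split.
  by have := apery_elt_in_semigroup 0 i; rewrite mul0n add0n.
case=> a_le /(in_semigroupP _ d_big) [X [j j_lt def_j]].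
have def_i : apery_elt i = X.+1 * a + apery_elt j.
  by rewrite mulSn -addnA -def_j subnKC.
have eq_ij : i = j.
  by apply: apery_elt_mod_inj => //; rewrite def_i modnMDl.
move: def_i; rewrite -eq_ij => def_i.
have : X.+1 * a = 0 by apply/eqP; rewrite -(eqn_add2r (apery_elt i)) -def_i add0n.
by move/eqP; rewrite muln_eq0 /= => /eqP a0; move: a_gt0; rewrite a0.
Qed.

End Semigroup.

Theorem theorem7p3 (a d r h n : nat) :
  0 < a -> 0 < d -> 2 <= r -> 0 < h -> 0 < n ->
  coprime a d -> coprime a r ->
  h * n * (r - 1) < d ->
  minimal_generators n.+2 (gens a d r h) ->
  forall s : nat,
    in_apery n.+2 (gens a d r h) a s <->
    (s = 0 \/ exists i, 1 <= i <= a - 1 /\ s = radic_len r n i * h * a + i * d).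
Proof.
move=> a_gt0 _ r_ge2 _ _ co_ad _ d_big _ s.
have r_gt0 : 0 < r by apply: leq_trans r_ge2.
apply: iff_trans (in_aperyP a_gt0 r_gt0 s co_ad d_big) _; split.
  case=> [[|i]] i_lt ->; first by left; rewrite /apery_elt radic_len_0.
  by right; exists i.+1; split; first lia.
case=> [-> | [i [i_range ->]]].
  by exists 0; rewrite // /apery_elt radic_len_0.
by exists i; first lia.
Qed.
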